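(* Let $g$ be a $1$-Lipschitz function on $\mathbb R$ supported on $[0,1]$, $N$ a positive integer, $L>0$, $\alpha\in(0,1]$ and $M>0$. For $\varepsilon=(\varepsilon_1,\ldots,\varepsilon_{2^N})\in\{-1,1\}^{2^N}$ define $G_\varepsilon(x)=L\sum_{k=0}^{2^N-1}\varepsilon_{k+1}\,g(2^Nx-k)$ for $x\in[0,1]$. If $L\le2^{-[(N-1)\alpha+1]}M$, then for every $\varepsilon\in\{-1,1\}^{2^N}$, $|G_\varepsilon(x)-G_\varepsilon(y)|\le M|x-y|^\alpha$ for all $x,y\in[0,1]$. *)

From Stdlib Require Import Reals.
Open Scope R_scope.

Definition lipschitz1 (g : R -> R) : Prop :=
  forall x y, Rabs (g x - g y) <= Rabs (x - y).

Definition supported_01 (g : R -> R) : Prop :=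
  forall x, (x < 0 \/ 1 < x) -> g x = 0.

Definition sign_vector (N : nat) (eps : nat -> R) : Prop :=
  forall k, (1 <= k <= 2 ^ N)%nat -> eps k = 1 \/ eps k = -1.

Definition G_eps (g : R -> R) (N : nat) (L : R) (eps : nat -> R) (x : R) : R :=
  L * sum_f_R0 (fun k => eps (S k) * g (2 ^ N * x - INR k)) (2 ^ N - 1).

(** The function [H t = sum_(k <= n) eps_(k+1) g (t - k)] is a sum of signed
    translates of [g] with supports [[k, k+1]] that overlap only at endpoints,
    where [g] vanishes.  Gluing such pieces keeps [H] 1-Lipschitz, and since at
    most one piece is nonzero at any point, [|g| <= min(u, 1 - u) <= 1/2] gives
    the same bound for [H].  Hence
    [|H a - H b| <= min(|a - b|, 1) <= |a - b|^alpha], and rescaling by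
    [G_eps x = L H (2^N x)] gives
    [|G_eps x - G_eps y| <= L 2^(N alpha) |x - y|^alpha <= 2^(alpha - 1) M |x - y|^alpha]. *)

From Stdlib Require Import Reals Lra Lia.
Open Scope R_scope.

Lemma Rabs_sign_mult (s a : R) : s = 1 \/ s = -1 -> Rabs (s * a) = Rabs a.
Proof.
  intros [-> | ->].
  - now rewrite Rmult_1_l.
  - replace (-1 * a) with (- a) by ring. apply Rabs_Ropp.
Qed.

Lemma lipschitz1_sign_mult (s : R) (f : R -> R) :
  s = 1 \/ s = -1 -> lipschitz1 f -> lipschitz1 (fun t => s * f t).
Proof.
  intros Hs Hf a b.
  rewrite <- Rmult_minus_distr_l, Rabs_sign_mult by exact Hs.
  apply Hf.
Qed.

Lemma lipschitz1_shift (c : R) (f : R -> R) :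
  lipschitz1 f -> lipschitz1 (fun t => f (t - c)).
Proof.
  intros Hf a b.
  replace (a - b) with ((a - c) - (b - c)) by ring.
  apply Hf.
Qed.

Lemma lipschitz1_glue (f1 f2 : R -> R) (c : R) :
  lipschitz1 f1 -> lipschitz1 f2 ->
  (forall t, c <= t -> f1 t = 0) -> (forall t, t <= c -> f2 t = 0) ->
  lipschitz1 (fun t => f1 t + f2 t).
Proof.
  intros Hf1 Hf2 Z1 Z2.
  assert (across : forall s t, s <= c <= t ->
            Rabs (f1 s + f2 s - (f1 t + f2 t)) <= Rabs (s - t)).
  { intros s t Hst.
    rewrite (Z2 s), (Z1 t), (Rabs_left1 (s - t)) by lra.
    specialize (Hf1 s c); specialize (Hf2 c t).
    rewrite (Z1 c) in Hf1 by lra. rewrite (Z2 c) in Hf2 by lra.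
    rewrite Rminus_0_r, (Rabs_left1 (s - c)) in Hf1 by lra.
    rewrite Rminus_0_l, Rabs_Ropp, (Rabs_left1 (c - t)) in Hf2 by lra.
    replace (f1 s + 0 - (0 + f2 t)) with (f1 s + - f2 t) by ring.
    eapply Rle_trans; [apply Rabs_triang | rewrite Rabs_Ropp; lra]. }
  intros s t.
  destruct (Rle_dec s c), (Rle_dec t c).
  - rewrite (Z2 s), (Z2 t), !Rplus_0_r by lra. apply Hf1.
  - apply across; lra.
  - rewrite <- Rabs_Ropp, Ropp_minus_distr, <- (Rabs_Ropp (s - t)), Ropp_minus_distr.
    apply across; lra.
  - rewrite (Z1 s), (Z1 t), !Rplus_0_l by lra. apply Hf2.
Qed.

Lemma lipschitz1_zero_of_approx (f : R -> R) (u : R) :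
  lipschitz1 f ->
  (forall d, 0 < d -> exists v, Rabs (u - v) <= d /\ f v = 0) -> f u = 0.
Proof.
  intros Hf Happrox.
  assert (Habs : Rabs (f u) <= 0).
  { apply Rle_plus_epsilon; intros d Hd.
    destruct (Happrox d Hd) as [v [Huv Hv]].
    pose proof (Hf u v) as Hlip. rewrite Hv, Rminus_0_r in Hlip. lra. }
  destruct (Req_dec (f u) 0) as [Hz | Hne]; [exact Hz |].
  pose proof (Rabs_pos_lt _ Hne). lra.
Qed.

Section Bump.

Variable g : R -> R.
Hypothesis g_lip : lipschitz1 g.
Hypothesis g_supp : supported_01 g.

Lemma bump_vanish_left (u : R) : u <= 0 -> g u = 0.
Proof.
  intros Hu.
  apply (lipschitz1_zero_of_approx g u g_lip). intros d Hd.
  exists (u - d). split.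
  - replace (u - (u - d)) with d by ring. rewrite Rabs_right; lra.
  - apply g_supp; left; lra.
Qed.

Lemma bump_vanish_right (u : R) : 1 <= u -> g u = 0.
Proof.
  intros Hu.
  apply (lipschitz1_zero_of_approx g u g_lip). intros d Hd.
  exists (u + d). split.
  - replace (u - (u + d)) with (- d) by ring. rewrite Rabs_Ropp, Rabs_right; lra.
  - apply g_supp; right; lra.
Qed.

Lemma bump_abs_le_half (u : R) : Rabs (g u) <= 1 / 2.
Proof.
  destruct (Rle_dec u 0) as [Hu | Hu].
  { rewrite bump_vanish_left, Rabs_R0 by exact Hu. lra. }
  destruct (Rle_dec 1 u) as [Hu' | Hu'].
  { rewrite bump_vanish_right, Rabs_R0 by exact Hu'. lra. }
  pose proof (g_lip u 0) as H0; pose proof (g_lip u 1) as H1.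
  rewrite (bump_vanish_left 0), !Rminus_0_r in H0 by lra.
  rewrite (bump_vanish_right 1), Rminus_0_r in H1 by lra.
  rewrite (Rabs_right u) in H0 by lra. rewrite (Rabs_left (u - 1)) in H1 by lra.
  lra.
Qed.

Variable eps : nat -> R.

Definition bump_sum (n : nat) (t : R) : R :=
  sum_f_R0 (fun k => eps (S k) * g (t - INR k)) n.

Lemma bump_sum_S (n : nat) (t : R) :
  bump_sum (S n) t = bump_sum n t + eps (S (S n)) * g (t - (INR n + 1)).
Proof. now unfold bump_sum; rewrite tech5, S_INR. Qed.

Lemma bump_sum_vanish (n : nat) (t : R) : INR n + 1 <= t -> bump_sum n t = 0.
Proof.
  induction n as [| n IH]; intros Ht.
  - unfold bump_sum; simpl in *. rewrite bump_vanish_right by lra. ring.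
  - rewrite S_INR in Ht.
    rewrite bump_sum_S, IH, bump_vanish_right by lra. ring.
Qed.

Lemma bump_sum_lipschitz1 (n : nat) :
  (forall k, (k <= n)%nat -> eps (S k) = 1 \/ eps (S k) = -1) ->
  lipschitz1 (bump_sum n).
Proof.
  induction n as [| n IH]; intros eps_sign.
  - unfold bump_sum; simpl.
    apply lipschitz1_sign_mult, lipschitz1_shift, g_lip. apply eps_sign; lia.
  - intros a b. rewrite !bump_sum_S.
    apply (lipschitz1_glue (bump_sum n) (fun t => eps (S (S n)) * g (t - (INR n + 1)))
             (INR n + 1)).
    + apply IH. intros k Hk. apply eps_sign; lia.
    + apply lipschitz1_sign_mult, lipschitz1_shift, g_lip. apply eps_sign; lia.
    + exact (bump_sum_vanish n).
    + intros t Ht. rewrite bump_vanish_left by lra. ring.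
Qed.

Lemma bump_sum_abs_le_half (n : nat) (t : R) :
  (forall k, (k <= n)%nat -> eps (S k) = 1 \/ eps (S k) = -1) ->
  Rabs (bump_sum n t) <= 1 / 2.
Proof.
  induction n as [| n IH]; intros eps_sign.
  - unfold bump_sum; simpl.
    rewrite Rabs_sign_mult by (apply eps_sign; lia). apply bump_abs_le_half.
  - rewrite bump_sum_S.
    destruct (Rle_dec t (INR n + 1)) as [Ht | Ht].
    + rewrite bump_vanish_left, Rmult_0_r, Rplus_0_r by lra.
      apply IH. intros k Hk. apply eps_sign; lia.
    + rewrite bump_sum_vanish, Rplus_0_l, Rabs_sign_mult by (lra || (apply eps_sign; lia)).
      apply bump_abs_le_half.
Qed.

End Bump.

Lemma min1_le_Rpower (s a alpha : R) :
  0 < alpha <= 1 -> a <= s -> a <= 1 -> a <= Rpower s alpha.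
Proof.
  intros Halpha Has Ha1.
  assert (Hpos : 0 < Rpower s alpha) by apply exp_pos.
  destruct (Rle_or_lt s 0) as [Hs0 | Hs0]; [lra |].
  destruct (Rle_or_lt 1 s) as [Hs1 | Hs1].
  - rewrite <- (Rpower_O s) in Ha1 by lra.
    eapply Rle_trans; [exact Ha1 | apply Rle_Rpower; lra].
  - (* [s = s^alpha * s^(1 - alpha) <= s^alpha * 1^(1 - alpha)] *)
    assert (Hsplit : s = Rpower s alpha * Rpower s (1 - alpha)).
    { rewrite <- Rpower_plus, Rplus_minus, Rpower_1 by lra. reflexivity. }
    assert (Hle1 : Rpower s (1 - alpha) <= 1).
    { replace 1 with (Rpower 1 (1 - alpha)) at 2
        by (unfold Rpower; now rewrite ln_1, Rmult_0_r, exp_0).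
      apply Rle_Rpower_l; lra. }
    rewrite Hsplit in Has.
    apply Rle_trans with (1 := Has).
    rewrite <- (Rmult_1_r (Rpower s alpha)) at 2.
    apply Rmult_le_compat_l; lra.
Qed.

Lemma lipschitz1_half_bounded_holder (f : R -> R) (alpha : R) :
  lipschitz1 f -> (forall t, Rabs (f t) <= 1 / 2) -> 0 < alpha <= 1 ->
  forall a b, Rabs (f a - f b) <= Rpower (Rabs (a - b)) alpha.
Proof.
  intros Hf Hb Halpha a b.
  apply min1_le_Rpower; [exact Halpha | apply Hf |].
  eapply Rle_trans; [apply Rabs_triang | rewrite Rabs_Ropp].
  pose proof (Hb a); pose proof (Hb b). lra.
Qed.

Lemma G_eps_bump_sum (g : R -> R) (N : nat) (L : R) (eps : nat -> R) (x : R) :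
  G_eps g N L eps x = L * bump_sum g eps (2 ^ N - 1) (2 ^ N * x).
Proof. reflexivity. Qed.

Lemma holder_constant_le (N : nat) (L alpha M : R) :
  alpha <= 1 -> 0 < M ->
  L <= Rpower 2 (- ((INR N - 1) * alpha + 1)) * M ->
  L * Rpower 2 (INR N * alpha) <= M.
Proof.
  intros Halpha HM HLM.
  assert (Hexp : Rpower 2 (- ((INR N - 1) * alpha + 1)) * Rpower 2 (INR N * alpha)
                 = Rpower 2 (alpha - 1)).
  { rewrite <- Rpower_plus. f_equal. ring. }
  assert (Hle1 : Rpower 2 (alpha - 1) <= 1).
  { apply Rle_trans with (Rpower 2 0); [apply Rle_Rpower; lra | rewrite Rpower_O; lra]. }
  assert (Hpos : 0 < Rpower 2 (INR N * alpha)) by apply exp_pos.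
  apply Rle_trans with (Rpower 2 (- ((INR N - 1) * alpha + 1)) * M * Rpower 2 (INR N * alpha)).
  - now apply Rmult_le_compat_r; lra.
  - rewrite Rmult_assoc, (Rmult_comm M), <- Rmult_assoc, Hexp. nra.
Qed.

Lemma Rpower_pow_mult (b d alpha : R) (N : nat) :
  0 < b -> 0 < d ->
  Rpower (b ^ N * d) alpha = Rpower b (INR N * alpha) * Rpower d alpha.
Proof.
  intros Hb Hd.
  rewrite <- Rpower_mult_distr, <- Rpower_pow, Rpower_mult by (auto using pow_lt).
  reflexivity.
Qed.

Theorem proposition8 (g : R -> R) (N : nat) (L alpha M : R) :
  lipschitz1 g -> supported_01 g ->
  (0 < N)%nat -> 0 < L -> 0 < alpha <= 1 -> 0 < M ->
  L <= Rpower 2 (- ((INR N - 1) * alpha + 1)) * M ->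
  forall eps : nat -> R, sign_vector N eps ->
  forall x y, 0 <= x <= 1 -> 0 <= y <= 1 ->
    Rabs (G_eps g N L eps x - G_eps g N L eps y) <= M * Rpower (Rabs (x - y)) alpha.
Proof.
  intros Hlip Hsupp _ HL Halpha HM HLM eps Heps x y _ _.
  destruct (Req_dec x y) as [<- | Hxy].
  { rewrite !Rminus_diag, Rabs_R0. apply Rmult_le_pos; [lra | left; apply exp_pos]. }
  assert (Hsign : forall k, (k <= 2 ^ N - 1)%nat -> eps (S k) = 1 \/ eps (S k) = -1).
  { pose proof (Nat.pow_nonzero 2 N). intros k Hk. apply Heps; lia. }
  pose proof (lipschitz1_half_bounded_holder _ alpha
                (bump_sum_lipschitz1 g Hlip Hsupp eps _ Hsign)
                (fun t => bump_sum_abs_le_half g Hlip Hsupp eps _ t Hsign) Halpha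
                (2 ^ N * x) (2 ^ N * y)) as Hholder.
  assert (H2N : 0 < 2 ^ N) by (apply pow_lt; lra).
  assert (Hd : 0 < Rabs (x - y)) by (apply Rabs_pos_lt; lra).
  rewrite <- Rmult_minus_distr_l, Rabs_mult, (Rabs_right (2 ^ N)), Rpower_pow_mult
    in Hholder by lra.
  rewrite !G_eps_bump_sum, <- Rmult_minus_distr_l, Rabs_mult, (Rabs_right L) by lra.
  pose proof (holder_constant_le N L alpha M (proj2 Halpha) HM HLM).
  assert (0 < Rpower (Rabs (x - y)) alpha) by apply exp_pos.
  nra.
Qed.
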